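(* $$\lim_{n\to\infty}\frac{|CK_n|}{|K_n|}=1.$$
   Context: $K_n=\{\sigma\in S_n: |\sigma_i-\sigma_{i+1}|>1 \text{ for all } 1\le i\le n-1\}$ (king permutations, in one-line notation), and $CK_n=\{\sigma\in K_n: |\sigma_1-\sigma_n|>1\}$ (cylindrical king permutations). *)

From mathcomp Require Import all_boot all_fingroup.
Set Implicit Arguments. Unset Strict Implicit. Unset Printing Implicit Defensive.

(* Distance of naturals: |a - b| > 1, written without truncated subtraction pitfalls. *)
Definition far (a b : nat) : bool := (a.+1 < b) || (b.+1 < a).

(* A permutation s of {0..n-1} (one-line notation s(0) ... s(n-1), shifted by -1
   relative to the paper's 1-based convention; differences are unaffected). *)
Definition is_king (n : nat) (s : {perm 'I_n}) : bool :=
  [forall i : 'I_n, forall j : 'I_n, (j == i.+1 :> nat) ==> far (s i) (s j)].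

Definition is_cyl_king (n : nat) (s : {perm 'I_n}) : bool :=
  is_king s &&
  [forall i : 'I_n, forall j : 'I_n,
     ((i == 0 :> nat) && (j == n.-1 :> nat)) ==> far (s i) (s j)].

Definition K (n : nat) : {set {perm 'I_n}} := [set s | is_king s].
Definition CK (n : nat) : {set {perm 'I_n}} := [set s | is_cyl_king s].

From mathcomp Require Import all_boot all_fingroup.
From mathcomp Require Import zify.

(* Every s in B_n = K_n \ CK_n has s(0) and s(n-1) adjacent values.
   Exchanging the entries of s at positions 0 and j, for an interior position
   j, gives a king permutation t unless one of the three new neighbour pairs
   is adjacent; as an entry is adjacent to at most three others, this rules
   out at most 9 of the n-3 interior positions.  The resulting t has
   t(j) = s(0) adjacent to t(n-1) = s(n-1), which holds for at most three
   positions j of any king permutation, and (t, j) determines s.  Double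
   counting the pairs (s, j) gives |B_n| (n - 12) <= 3 |K_n|, hence
   |CK_n| / |K_n| >= 1 - 6/n for n >= 24. *)

Set Implicit Arguments. Unset Strict Implicit. Unset Printing Implicit Defensive.

Lemma farC a b : far a b = far b a.
Proof. by rewrite /far orbC. Qed.

Lemma count_not_far (T : eqType) (f : T -> nat) (r : seq T) c :
  uniq r -> {in r &, injective f} -> count (fun x => ~~ far (f x) c) r <= 3.
Proof.
move=> r_uniq f_inj; rewrite -size_filter -(size_map f).
apply: (@uniq_leq_size _ _ [:: c.-1; c; c.+1]).
  rewrite map_inj_in_uniq ?filter_uniq //.
  by apply: sub_in2 f_inj => x; rewrite mem_filter => /andP[].
move=> y /mapP[x]; rewrite mem_filter => /andP[near_c _] ->.
by move: near_c; rewrite !inE /far; lia.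
Qed.

Lemma count_sum (T : eqType) (a : pred T) (r : seq T) :
  count a r = \sum_(x <- r) a x.
Proof. by rewrite -sumn_count sumnE big_map. Qed.

Lemma sum_count_card (T : finType) (I : eqType) (A : {set T})
    (p : T -> pred I) (r : seq I) :
  \sum_(t in A) count (p t) r = \sum_(i <- r) #|[set t in A | p t i]|.
Proof.
under eq_bigr do rewrite count_sum.
rewrite exchange_big; apply: eq_bigr => i _.
rewrite -sum1_card big_mkcond [RHS]big_mkcond; apply: eq_bigr => t _.
by rewrite !inE; case: (t \in A); case: (p t i).
Qed.

(* Junk value 0 at positions i >= n. *)
Definition entry n (s : {perm 'I_n}) (i : nat) : nat :=
  if insub i is Some x then val (s x) else 0.

Section Entries.

Variables (n : nat) (s : {perm 'I_n}).

Lemma entryE (x : 'I_n) : entry s x = s x.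
Proof. by rewrite /entry valK. Qed.

Lemma entry_ord i (lt_i_n : i < n) : entry s i = s (Ordinal lt_i_n).
Proof. by rewrite -entryE. Qed.

Lemma entry_out i : n <= i -> entry s i = 0.
Proof. by move=> le_n_i; rewrite /entry insubF // ltnNge le_n_i. Qed.

Lemma eq_entry i j : i < n -> j < n -> (entry s i == entry s j) = (i == j).
Proof.
move=> lt_i_n lt_j_n.
by rewrite (entry_ord lt_i_n) (entry_ord lt_j_n) (inj_eq (@ord_inj n))
  (inj_eq perm_inj).
Qed.

Lemma kingP :
  reflect (forall i, i.+1 < n -> far (entry s i) (entry s i.+1)) (s \in K n).
Proof.
rewrite inE; apply: (iffP forallP) => [king i lt_Si_n | king i].
  have := forallP (king (Ordinal (ltnW lt_Si_n))) (Ordinal lt_Si_n).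
  by rewrite eqxx -!entryE.
apply/forallP => j; apply/implyP => /eqP j_Si.
by rewrite -!entryE j_Si; apply: king; rewrite -j_Si.
Qed.

End Entries.

Lemma entry_tpermM n (s : {perm 'I_n}) (x y : 'I_n) i :
  entry (tperm x y * s)%g i
  = entry s (if i == val x then val y else if i == val y then val x else i).
Proof.
case: (ltnP i n) => [lt_i_n | le_n_i]; last first.
  have [/= lt_x_n lt_y_n] := (ltn_ord x, ltn_ord y).
  by rewrite !ifN ?entry_out //; apply/eqP; lia.
rewrite -[i]/(val (Ordinal lt_i_n)) entryE permM !(inj_eq val_inj).
case: tpermP => [-> | -> | /eqP/negbTE-> /eqP/negbTE->]; rewrite ?eqxx ?entryE //.
by case: eqP => [-> | _]; rewrite entryE.
Qed.

Lemma CK_sub_K n : CK n \subset K n.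
Proof. by apply/subsetP => s; rewrite !inE => /andP[]. Qed.

Lemma king_not_cyl_near m (s : {perm 'I_m.+1}) :
  s \in K m.+1 -> s \notin CK m.+1 -> ~~ far (entry s 0) (entry s m).
Proof.
rewrite !inE /is_cyl_king => -> /= /forallPn[i /forallPn[j]].
by rewrite negb_imply => /andP[/andP[/eqP i0 /eqP jm]]; rewrite -!entryE i0 jm.
Qed.

Definition interior (n : nat) : seq nat := iota 2 (n - 3).

Lemma mem_interior n j : (j \in interior n) = (2 <= j) && (j.+1 < n).
Proof. by rewrite mem_iota; lia. Qed.

Lemma interior_entry_inj n (s : {perm 'I_n}) :
  {in interior n &, injective (entry s)}.
Proof. by move=> i j /[!mem_interior] Ji Jj /eqP; rewrite eq_entry; lia. Qed.

Definition swappable n (s : {perm 'I_n}) (j : nat) : bool :=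
  [&& far (entry s j) (entry s 1), far (entry s j.-1) (entry s 0)
    & far (entry s j.+1) (entry s 0)].

Lemma count_swappable n (s : {perm 'I_n}) :
  n - 12 <= count (swappable s) (interior n).
Proof.
set J := interior n.
have J_uniq : uniq J := iota_uniq 2 (n - 3).
have entry_pred_inj : {in J &, injective (fun j => entry s j.-1)}.
  by move=> i j /[!mem_interior] Ji Jj /eqP; rewrite eq_entry; lia.
have entry_succ_inj : {in J &, injective (fun j => entry s j.+1)}.
  by move=> i j /[!mem_interior] Ji Jj /eqP; rewrite eq_entry; lia.
have bad : count (predC (swappable s)) J <= 9.
  have bad_le_sum : count (predC (swappable s)) J
      <= count (fun j => ~~ far (entry s j) (entry s 1)) J
       + count (fun j => ~~ far (entry s j.-1) (entry s 0)) J
       + count (fun j => ~~ far (entry s j.+1) (entry s 0)) J.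
    rewrite !count_sum -!big_split /=; apply: leq_sum => j _.
    by rewrite /swappable; do 3 case: far.
  have /= := count_not_far (entry s 1) J_uniq (@interior_entry_inj n s).
  have /= := count_not_far (entry s 0) J_uniq entry_pred_inj.
  have /= := count_not_far (entry s 0) J_uniq entry_succ_inj.
  lia.
by have := count_predC (swappable s) J; rewrite size_iota; lia.
Qed.

Section Swap.

Variables (m j : nat).
Hypothesis j_interior : j \in interior m.+1.

Definition swap0 (s : {perm 'I_m.+1}) : {perm 'I_m.+1} :=
  (tperm ord0 (inord j) * s)%g.

Lemma swap0_inj : injective swap0.
Proof. exact: mulgI. Qed.

Lemma entry_swap0 s i :
  entry (swap0 s) i = entry s (if i == 0 then j else if i == j then 0 else i).
Proof.
move: j_interior; rewrite mem_interior => /andP[_ lt_Sj_n].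
by rewrite entry_tpermM /= inordK //; lia.
Qed.

Lemma swap0_king s : s \in K m.+1 -> swappable s j -> swap0 s \in K m.+1.
Proof.
move: j_interior; rewrite mem_interior => /andP[le_2_j lt_Sj_n].
move=> /kingP king /and3P[far_j1 far_Pj0 far_Sj0].
apply/kingP => i lt_Si_n; rewrite !entry_swap0.
case: (i =P 0) => [-> | _]; first by rewrite !ifN //; lia.
case: (i =P j) => [-> | _]; first by rewrite !ifN 1?farC //; lia.
case: (i.+1 =P j) => [Si_j | _].
  by move: far_Pj0; rewrite -Si_j /=.
exact: king.
Qed.

Lemma swap0_near s : s \in K m.+1 -> s \notin CK m.+1 ->
  ~~ far (entry (swap0 s) j) (entry (swap0 s) m).
Proof.
move: j_interior; rewrite mem_interior => /andP[le_2_j lt_Sj_n] sK sCK.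
rewrite !entry_swap0 eqxx !ifN; try lia.
exact: king_not_cyl_near.
Qed.

Lemma card_swappable_le :
  #|[set s in K m.+1 :\: CK m.+1 | swappable s j]|
  <= #|[set t in K m.+1 | ~~ far (entry t j) (entry t m)]|.
Proof.
rewrite -(card_imset _ swap0_inj).
apply/subset_leq_card/subsetP => _ /imsetP[s + ->].
rewrite in_set in_setD => /andP[/andP[sCK sK] sw].
by rewrite in_set swap0_king ?swap0_near.
Qed.

End Swap.

Lemma card_not_cyl_king_bound m :
  #|K m.+1 :\: CK m.+1| * (m.+1 - 12) <= 3 * #|K m.+1|.
Proof.
set B := K m.+1 :\: CK m.+1; set J := interior m.+1.
have swappable_lb : #|B| * (m.+1 - 12) <= \sum_(s in B) count (swappable s) J.
  by rewrite -sum_nat_const; apply: leq_sum => s _; apply: count_swappable.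
have near_last_ub :
    \sum_(t in K m.+1) count (fun j => ~~ far (entry t j) (entry t m)) J
    <= 3 * #|K m.+1|.
  rewrite mulnC -sum_nat_const; apply: leq_sum => t _.
  exact: count_not_far (iota_uniq _ _) (@interior_entry_inj _ t).
apply: leq_trans swappable_lb _; apply: leq_trans _ near_last_ub.
rewrite !sum_count_card !big_seq; apply: leq_sum => j Jj.
exact: card_swappable_le.
Qed.

Definition odds_then_evens n i := if i < n./2 then i.*2.+1 else (i - n./2).*2.

Lemma odds_then_evens_lt n i : i < n -> odds_then_evens n i < n.
Proof. by rewrite /odds_then_evens; case: ifP; lia. Qed.

Lemma card_K_gt0 n : 4 <= n -> 0 < #|K n|.
Proof.
move=> le_4_n; pose f (x : 'I_n) := Ordinal (odds_then_evens_lt (ltn_ord x)).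
have f_inj : injective f.
  move=> x y /(congr1 val) /=; rewrite /odds_then_evens => e; apply: ord_inj.
  by move: e (ltn_ord x) (ltn_ord y); case: ifP; case: ifP; lia.
apply/card_gt0P; exists (perm f_inj); apply/kingP => i lt_Si_n.
rewrite (entry_ord _ (ltnW lt_Si_n)) (entry_ord _ lt_Si_n) !permE /=.
by rewrite /odds_then_evens /far; case: ifP; case: ifP; lia.
Qed.

Lemma card_K_diff_CK_bound n : 24 <= n -> (#|K n| - #|CK n|) * n <= 6 * #|K n|.
Proof.
case: n => [// | m] le_24_n.
have := card_not_cyl_king_bound m.
rewrite cardsD (setIidPr (CK_sub_K _)); set b := _ - _ => bound.
have : b * m.+1 <= b * (2 * (m.+1 - 12)).
  by rewrite leq_mul2l; apply/orP; right; lia.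
by rewrite mulnCA; lia.
Qed.

From Stdlib Require Import Reals Lra.
From Coquelicot Require Import Coquelicot.

Local Open Scope R_scope.

Lemma ratio_bounds (a c k x : R) :
  0 < k -> 0 < x -> c <= k -> (k - c) * x <= a * k -> 1 - a / x <= c / k <= 1.
Proof.
move=> k_gt0 x_gt0 c_le_k bound; split; last by apply/Rle_div_l => //; lra.
suff : 0 <= c / k - (1 - a / x) by lra.
have -> : c / k - (1 - a / x) = (a * k - (k - c) * x) / (k * x) by field; lra.
by apply: Rdiv_le_0_compat; [lra | apply: Rmult_lt_0_compat].
Qed.

Lemma is_lim_seq_one_sub_div (a : R) : is_lim_seq (fun n => 1 - a / INR n) 1.
Proof.
have inv_INR : is_lim_seq (fun n => / INR n) 0.
  exact: (is_lim_seq_inv _ _ is_lim_seq_INR).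
have := is_lim_seq_minus' _ _ 1 (a * 0) (is_lim_seq_const 1)
  (is_lim_seq_scal_l _ a _ inv_INR).
by rewrite Rmult_0_r Rminus_0_r.
Qed.

Theorem theorem3p2 :
  is_lim_seq (fun n : nat => (INR #|CK n| / INR #|K n|)%R) 1%R.
Proof.
apply: (is_lim_seq_le_le_loc _ _ _ _ _
  (is_lim_seq_one_sub_div 6) (is_lim_seq_const 1)).
exists 24%nat => n /leP le_24_n.
have CK_le_K : (#|CK n| <= #|K n|)%nat by apply/subset_leq_card/CK_sub_K.
apply: ratio_bounds.
- by apply/lt_0_INR/ltP/card_K_gt0; apply: leq_trans le_24_n.
- by apply/lt_0_INR/ltP; apply: leq_trans le_24_n.
- exact/le_INR/leP.
- rewrite -minus_INR -?mult_INR; last exact/leP.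
  rewrite (_ : 6 = INR 6); last by rewrite /=; ring.
  by rewrite -mult_INR; apply/le_INR/leP/card_K_diff_CK_bound.
Qed.
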